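(* Let $(N,A_1,A_2,\dots)$ be as in the context. Then $N_\delta(t)=N_\delta(ct)$ for all $t\in\mathbb{R}^d\setminus\{0\}$, $\delta\ge0$ and $c>0$. If moreover Conditions (C1) and (C7) hold, then there exist $\delta_0>0$ and $\eta>0$ such that $\mathbb{E}[N_\delta(t)]>1+\eta$ for all $t\in\mathbb{R}^d\setminus\{0\}$ and all $\delta\in[0,\delta_0]$.
   Context: Notation: $G$ is the set of $d\times d$ nonnegative matrices; $|x|=\sum_i|x_i|$; $\mathbb{S}^{d-1}=\{x\in\mathbb{R}^d:|x|=1\}$. Setting: random $A_i\in G$, $N=\#\{i:A_i\ne0\}<\infty$ a.s., $A_i\ne0$ iff $i\le N$. For $t\in\mathbb{R}^d$ and $\delta\ge0$: $N(t)=\#\{i\ge1:A_i^Tt\ne0\}$ and $N_\delta(t)=\#\{1\le i\le N:|A_i^Tt|>\delta|t|\}$. (C1) $N\ge1$ a.s., $\mathbb{E}[N]\in(1,\infty)$, $A_i\in G$, $A_i\ne0$ iff $i\le N$. (C7) A.s. $N(t)\ge1$ for all $t\ne0$, and $\mathbb{P}[N(t)=1]<1$ for each $t\ne0$; there exist $\varepsilon_0>0$ and for each $t\in\mathbb{S}^{d-1}$ an index $i(t)\in\mathbb{N}^*$ with $A_{i(t)}^Tt\ne0$ such that $\sup_{t\in\mathbb{S}^{d-1}}\mathbb{E}[|A_{i(t)}^Tt|^{-\varepsilon_0}]<\infty$. *)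

From HB Require Import structures.
From mathcomp Require Import all_boot all_order all_algebra.
From mathcomp Require Import all_classical all_reals all_analysis.
Set Implicit Arguments. Unset Strict Implicit. Unset Printing Implicit Defensive.
Import Order.TTheory GRing.Theory Num.Theory.
Local Open Scope ring_scope.

Definition l1norm (R : realType) (d : nat) (x : 'cV[R]_d) : R :=
  \sum_(i < d) `|x i ord0|.

Definition Ndelta (T : Type) (R : realType) (d : nat)
  (A : nat -> T -> 'M[R]_d) (N : T -> nat) (delta : R) (t : 'cV[R]_d) (w : T) : nat :=
  count (fun i => delta * l1norm t < l1norm ((A i w)^T *m t)) (iota 1 (N w)).

(* N(t)(w) = #{i >= 1 : A_i(w)^T t <> 0}; since A_i = 0 for i > N(w), the
   count is over 1 <= i <= N(w). *)
Definition Nt (T : Type) (R : realType) (d : nat)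
  (A : nat -> T -> 'M[R]_d) (N : T -> nat) (t : 'cV[R]_d) (w : T) : nat :=
  count (fun i => (A i w)^T *m t != 0) (iota 1 (N w)).

(* |x|^{-eps} as an extended real, with the convention |0|^{-eps} = +oo *)
Definition negpow (R : realType) (d : nat) (eps : R) (x : 'cV[R]_d) : \bar R :=
  if x == 0 then +oo%E else ((l1norm x) `^ (- eps))%:E.

(* Scaling t by c > 0 multiplies both sides of |A_i^T t| > delta |t| by c.
   For the lower bound fix t with |t| = 1. As N(t) >= 1 a.s. and P[N(t) = 1] < 1,
   p := P[N(t) >= 2] > 0. Call w k-tame when every nonzero A_i^T t has norm > 1/(k+1) and
   every A_i has total mass <= k; a Lipschitz estimate then gives N(t) <= N_delta(t') on the
   k-tame event whenever |t' - t| and delta are at most rho_k = 1/((k+1)(k+2)). The k-tame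
   events increase to the whole space, so one of them has probability > 1 - p/4, and then
   E[N_delta(t')] >= P(tame, N(t) >= 1) + P(tame, N(t) >= 2) > 1 + p/2 for t' near t.
   Compactness of the unit sphere makes delta_0 and eta uniform in t. *)

From HB Require Import structures.
From mathcomp Require Import all_boot all_order all_algebra.
From mathcomp Require Import all_classical all_reals all_analysis.
From mathcomp Require Import measurable_realfun.
From mathcomp Require Import lra.
Set Implicit Arguments. Unset Strict Implicit. Unset Printing Implicit Defensive.
Import Order.TTheory GRing.Theory Num.Theory.
Import numFieldNormedType.Exports.
Local Open Scope ring_scope.
Local Open Scope classical_set_scope.

Section l1norm.
Variables (R : realType) (d : nat).
Implicit Types (x y : 'cV[R]_d) (M : 'M[R]_d).

Lemma l1norm_ge0 x : 0 <= l1norm x.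
Proof. exact: sumr_ge0. Qed.

Lemma l1normZ (c : R) x : l1norm (c *: x) = `|c| * l1norm x.
Proof. by rewrite /l1norm mulr_sumr; apply: eq_bigr => i _; rewrite mxE normrM. Qed.

Lemma l1normN x : l1norm (- x) = l1norm x.
Proof. by apply: eq_bigr => i _; rewrite mxE normrN. Qed.

Lemma l1norm_distC x y : l1norm (x - y) = l1norm (y - x).
Proof. by rewrite -l1normN opprB. Qed.

Lemma ler_l1normD x y : l1norm (x + y) <= l1norm x + l1norm y.
Proof. by rewrite /l1norm -big_split; apply: ler_sum => i _; rewrite mxE ler_normD. Qed.

Lemma ler_norm_l1norm x i : `|x i ord0| <= l1norm x.
Proof. by rewrite /l1norm (bigD1 i) //= lerDl sumr_ge0. Qed.

Lemma ler_dist_l1norm x y : `|l1norm x - l1norm y| <= l1norm (x - y).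
Proof.
have Dx := ler_l1normD (x - y) y; have Dy := ler_l1normD (y - x) x.
rewrite !subrK in Dx Dy; rewrite l1norm_distC in Dy.
by rewrite ler_norml; apply/andP; split; lra.
Qed.

Lemma l1norm_eq0 x : (l1norm x == 0) = (x == 0).
Proof.
apply/eqP/eqP => [x0|->]; last by rewrite /l1norm big1 // => i _; rewrite mxE normr0.
apply/matrixP => i j; rewrite (ord1 j) mxE; apply/normr0_eq0/le_anti.
by rewrite normr_ge0 -x0 ler_norm_l1norm.
Qed.

Lemma l1norm_gt0 x : (0 < l1norm x) = (x != 0).
Proof. by rewrite lt_def l1norm_eq0 l1norm_ge0 andbT. Qed.

Lemma l1norm_normalize x : x != 0 -> l1norm ((l1norm x)^-1 *: x) = 1.
Proof.
by rewrite -l1norm_gt0 => x0; rewrite l1normZ ger0_norm ?invr_ge0 ?ltW // mulVf ?gt_eqF.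
Qed.

Definition msum M : R := \sum_(j < d) \sum_(k < d) M j k.

Lemma msum_ge0 M : (forall j k, 0 <= M j k) -> 0 <= msum M.
Proof. by move=> M0; do 2!apply: sumr_ge0 => ? _. Qed.

Lemma ler_l1norm_mulmx M x : (forall j k, 0 <= M j k) ->
  l1norm (M^T *m x) <= msum M * l1norm x.
Proof.
move=> M0; rewrite /l1norm /msum exchange_big mulr_suml; apply: ler_sum => k _.
rewrite mxE mulr_suml; apply: le_trans (ler_norm_sum _ _ _) _; apply: ler_sum => j _.
by rewrite mxE normrM ger0_norm // ler_wpM2l // ler_norm_l1norm.
Qed.

Definition tame_radius (k : nat) : R := k.+1%:R^-1 / (k%:R + 2).

Lemma tame_radius_gt0 k : 0 < tame_radius k.
Proof. by rewrite divr_gt0 ?invr_gt0 ?ltr0n // ltr_wpDl. Qed.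

(* |M^T y| >= |M^T x| - k |y - x| > 1/(k+1) - k rho = 2 rho >= rho (1 + rho) >= delta |y|,
   where rho = tame_radius k <= 1/2. *)
Lemma l1norm_mulmx_perturb M x y (k : nat) (delta : R) :
  (forall j l, 0 <= M j l) -> msum M <= k%:R -> l1norm x = 1 ->
  k.+1%:R^-1 < l1norm (M^T *m x) ->
  l1norm (y - x) <= tame_radius k -> 0 <= delta -> delta <= tame_radius k ->
  delta * l1norm y < l1norm (M^T *m y).
Proof.
move=> M0 Mk x1 Mx yx d0 drho.
set m := k.+1%:R^-1 in Mx; set rho := tame_radius k in yx drho.
have rho0 : 0 < rho := tame_radius_gt0 k.
have m_def : m = k%:R * rho + 2 * rho.
  by rewrite -mulrDl mulrC divfK // gt_eqF // ltr_wpDl.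
have m1 : m <= 1 by rewrite invf_le1 ?ltr0n // ler1n.
have krho : 0 <= k%:R * rho by rewrite mulr_ge0 // ltW.
have lip : l1norm (M^T *m x) <= l1norm (M^T *m y) + msum M * l1norm (y - x).
  have -> : M^T *m x = M^T *m y - M^T *m (y - x) by rewrite mulmxBr opprB addrC subrK.
  by apply: le_trans (ler_l1normD _ _) _; rewrite l1normN lerD2l ler_l1norm_mulmx.
have Mrho : msum M * l1norm (y - x) <= k%:R * rho.
  by apply: ler_pM => //; [exact: msum_ge0 | exact: l1norm_ge0].
have y_le : l1norm y <= 1 + rho.
  by rewrite -x1 -[y](addrNK x) addrC; apply: le_trans (ler_l1normD _ _) _; rewrite lerD2l.
have dy : delta * l1norm y <= rho * (1 + rho) by apply: ler_pM => //; exact: l1norm_ge0.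
have rho2 : rho * rho <= rho by rewrite ler_piMr // ltW; lra.
by move: dy; rewrite mulrDr mulr1; clearbody m rho; lra.
Qed.

End l1norm.

Section measurable_seq_events.
Context d (T : measurableType d).
Implicit Types (p : nat -> T -> bool) (Q : seq bool -> bool).

Lemma measurable_seq_pred p (s : seq nat) Q :
  (forall i, measurable [set w | p i w]) ->
  measurable [set w | Q [seq p i w | i <- s]].
Proof.
move=> mp; elim: s Q => [|i s IH] Q /=.
  case: (Q [::]); first by rewrite (_ : [set _ | _] = setT) //; apply/seteqP.
  by rewrite (_ : [set _ | _] = set0) //; apply/seteqP; split.
rewrite (_ : [set w | _] =
    [set w | p i w] `&` [set w | Q (true :: [seq p j w | j <- s])] `|`
    ~` [set w | p i w] `&` [set w | Q (false :: [seq p j w | j <- s])]).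
  apply: measurableU; apply: measurableI.
  - exact: mp.
  - exact: (IH (fun l => Q (true :: l))).
  - by apply: measurableC.
  - exact: (IH (fun l => Q (false :: l))).
apply/seteqP; split => w /=; case: (p i w) => //; [by left | by right | by case=> -[]..].
Qed.

Lemma measurable_seq_pred_iota p (N : T -> nat) Q :
  (forall n, measurable [set w | N w = n]) ->
  (forall i, measurable [set w | p i w]) ->
  measurable [set w | Q [seq p i w | i <- iota 1 (N w)]].
Proof.
move=> mN mp.
rewrite (_ : [set w | _] =
    \bigcup_n ([set w | N w = n] `&` [set w | Q [seq p i w | i <- iota 1 n]])).
  by apply: bigcupT_measurable => n; apply: measurableI => //; exact: measurable_seq_pred.
by apply/seteqP; split => [w QN|w [n _ [/= -> //]]]; exists (N w).
Qed.

Lemma measurable_count_iota p (N : T -> nat) (m : nat) :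
  (forall n, measurable [set w | N w = n]) ->
  (forall i, measurable [set w | p i w]) ->
  measurable [set w | count (p ^~ w) (iota 1 (N w)) = m].
Proof.
move=> mN mp; have := measurable_seq_pred_iota (fun l => count id l == m) mN mp.
by congr measurable; apply/seteqP; split => w /=; rewrite count_map => /eqP.
Qed.

Lemma measurable_all_iota p (N : T -> nat) :
  (forall n, measurable [set w | N w = n]) ->
  (forall i, measurable [set w | p i w]) ->
  measurable [set w | all (p ^~ w) (iota 1 (N w))].
Proof.
move=> mN mp; have := measurable_seq_pred_iota (all id) mN mp.
by congr measurable; apply/seteqP; split => w /=; rewrite all_map.
Qed.

Lemma measurable_set_bool (b : T -> bool) : measurable_fun setT b -> measurable [set w | b w].
Proof.
move=> mb; have := mb measurableT [set true] I.
by rewrite setTI; congr measurable; apply/seteqP; split => w /=.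
Qed.

Lemma measurable_nat_pred (X : T -> nat) (Q : set nat) :
  (forall n, measurable [set w | X w = n]) -> measurable [set w | Q (X w)].
Proof.
move=> mX; rewrite (_ : [set w | _] = \bigcup_(n in Q) [set w | X w = n]).
  by apply: bigcup_measurable => n _; exact: mX.
by apply/seteqP; split => [w QX|w [n Qn /= ->]] //; exists (X w).
Qed.

Lemma measurable_fun_natr (R : realType) (X : T -> nat) :
  (forall n, measurable [set w | X w = n]) ->
  measurable_fun setT (fun w => ((X w)%:R : R)%:E).
Proof.
move=> mX _ B _; rewrite setTI; exact: (measurable_nat_pred (fun n => B (n%:R : R)%:E) mX).
Qed.

End measurable_seq_events.

Section real_probability.
Context d (T : measurableType d) (R : realType) (P : probability T R).
Implicit Types X Y : set T.

Definition pr X : R := fine (P X).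

Lemma prE X : measurable X -> P X = (pr X)%:E.
Proof.
move=> mX; rewrite /pr fineK // ge0_fin_numE // (le_lt_trans (probability_le1 P mX)) //.
by rewrite ltry.
Qed.

Lemma pr_ge0 X : measurable X -> 0 <= pr X.
Proof. by move=> mX; rewrite -lee_fin -prE. Qed.

Lemma pr_le1 X : measurable X -> pr X <= 1.
Proof. by move=> mX; rewrite -lee_fin -prE ?probability_le1. Qed.

Lemma pr_setC X : measurable X -> pr (~` X) = 1 - pr X.
Proof.
move=> mX; apply/EFin_inj; rewrite -prE ?probability_setC //; last exact: measurableC.
by rewrite prE.
Qed.

Lemma le_pr X Y : measurable X -> measurable Y -> X `<=` Y -> pr X <= pr Y.
Proof. by move=> mX mY XY; rewrite -lee_fin -!prE // le_measure // inE. Qed.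

Lemma pr_setU X Y : measurable X -> measurable Y ->
  pr (X `|` Y) = pr X + pr Y - pr (X `&` Y).
Proof.
move=> mX mY; have mXY := measurableI _ _ mX mY.
apply/EFin_inj; rewrite EFinB EFinD -(prE mX) -(prE mY) -(prE mXY) -prE.
  by rewrite measureUfinl // (le_lt_trans (probability_le1 P mX)) ?ltry.
exact: measurableU.
Qed.

Lemma pr_setU_le X Y : measurable X -> measurable Y -> pr (X `|` Y) <= pr X + pr Y.
Proof. by move=> mX mY; rewrite pr_setU // lerBlDr lerDl pr_ge0 //; exact: measurableI. Qed.

Lemma pr_setI_ge X Y : measurable X -> measurable Y -> pr X + pr Y - 1 <= pr (X `&` Y).
Proof.
move=> mX mY; have := pr_le1 (measurableU _ _ mX mY); rewrite pr_setU //; lra.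
Qed.

Lemma pr_ae (Q : T -> Prop) : measurable [set w | Q w] -> {ae P, forall w, Q w} ->
  pr [set w | Q w] = 1.
Proof.
move=> mQ /(negligibleP _ (measurableC mQ)) PQC.
by have := pr_setC mQ; rewrite /pr PQC /=; lra.
Qed.

Lemma pr_ge2_gt0 (X : T -> nat) : (forall n, measurable [set w | X w = n]) ->
  {ae P, forall w, (1 <= X w)%N} -> (P [set w | X w = 1%N] < 1)%E ->
  0 < pr [set w | (2 <= X w)%N].
Proof.
move=> mX X_ge1 PX1; set G := [set w | _]; set H := [set w | (1 <= X w)%N].
have mG : measurable G by exact: (measurable_nat_pred (fun n => 2 <= n)%N mX).
have mH : measurable H by exact: (measurable_nat_pred (fun n => 1 <= n)%N mX).
have mX1 : measurable [set w | X w = 1%N] by exact: mX.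
have GC_sub : ~` G `<=` [set w | X w = 1%N] `|` ~` H.
  by move=> w /=; rewrite /G /H /=; case: (X w) => [|[|n]]; [right|left|].
have := le_pr (measurableC mG) (measurableU _ _ mX1 (measurableC mH)) GC_sub.
have := pr_setU_le mX1 (measurableC mH); rewrite !pr_setC // (pr_ae mH X_ge1).
by move: PX1; rewrite prE // lte_fin; lra.
Qed.

End real_probability.

Lemma tail2_le_integral_nat d (T : measurableType d) (R : realType)
    (mu : {measure set T -> \bar R}) (E : set T) (X Y : T -> nat) :
  measurable E -> (forall n, measurable [set w | X w = n]) ->
  (forall n, measurable [set w | Y w = n]) -> (forall w, E w -> (X w <= Y w)%N) ->
  (mu (E `&` [set w | (1 <= X w)%N]) + mu (E `&` [set w | (2 <= X w)%N]) <=
   \int[mu]_w ((Y w)%:R : R)%:E)%E.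
Proof.
move=> mE mX mY XY; set E1 := E `&` _; set E2 := E `&` _.
have mE1 : measurable E1 by exact: measurableI (measurable_nat_pred (fun n => 1 <= n)%N mX).
have mE2 : measurable E2 by exact: measurableI (measurable_nat_pred (fun n => 2 <= n)%N mX).
rewrite -(setIT E1) -(setIT E2) -!integral_indic // -ge0_integralD //; last 2 first.
- by apply/measurable_EFinP; exact: measurable_indic.
- by apply/measurable_EFinP; exact: measurable_indic.
apply: ge0_le_integral => //.
- by move=> w _; rewrite adde_ge0 // lee_fin indicE.
- by apply: emeasurable_funD; apply/measurable_EFinP; exact: measurable_indic.
- exact: measurable_fun_natr.
move=> w _; rewrite -EFinD lee_fin !indicE /E1 /E2 !in_setI.
have [Ew|] := boolP (w \in E); last by rewrite /= addr0 ler0n.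
have memX k : (w \in [set w | (k <= X w)%N]) = (k <= X w)%N.
  by apply/idP/idP => [/set_mem|/mem_set].
rewrite /= !memX -natrD ler_nat; apply: leq_trans (XY w (set_mem Ew)).
by case: (X w) => [|[|n]].
Qed.

Section l1sphere.
Variables (R : realType) (d : nat).

Lemma near_l1norm_lt (x : 'rV[R]_d) (e : R) : 0 < e ->
  \forall y \near x, l1norm (y^T - x^T) < e.
Proof.
move=> e0; have e'0 : 0 < e / (d%:R + 1) by rewrite divr_gt0 // ltr_wpDl.
near=> y; have : ball x (e / (d%:R + 1)) y by near: y; exact: (@near_ball _ _ x _ e'0).
rewrite /ball /= => -[_ xy]; apply: (@le_lt_trans _ _ (\sum_(j < d) e / (d%:R + 1))).
  by apply: ler_sum => j _; rewrite !mxE distrC; apply: ltW; have := xy ord0 j; rewrite -ball_normE.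
rewrite sumr_const card_ord -[X in X < _]mulr_natl mulrCA gtr_pMr //.
by rewrite ltr_pdivrMr ?mul1r ?ltrDl ?ltr_wpDl.
Unshelve. all: by end_near.
Qed.

(* The sphere is covered inside the compact cube [-1, 1]^d of row vectors. *)
Lemma uniform_on_l1sphere (Phi : R -> 'cV[R]_d -> Prop) :
  (forall t, l1norm t = 1 -> exists2 rho, 0 < rho &
     forall t' e, l1norm (t' - t) <= rho -> 0 < e -> e <= rho -> Phi e t') ->
  exists2 e, 0 < e & forall t, l1norm t = 1 -> Phi e t.
Proof.
move=> loc; pose K := [set v : 'rV[R]_d | forall i, `[-1, 1]%classic (v ord0 i)].
have cK : compact K.
  exact: (@rV_compact R d (fun=> `[-1, 1]%classic) (fun=> @segment_compact R (-1) 1)).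
have : \forall e \near 0^'+, K `<=` [set v | l1norm v^T = 1 -> Phi e v^T].
  apply: ((compact_near_coveringP K).1 cK R 0^'+ (fun e v => l1norm v^T = 1 -> Phi e v^T)) => x _.
  have [x1|x1] := eqVneq (l1norm x^T) 1.
    have [rho rho0 Phi_near] := loc _ x1.
    near=> v e.
    have e0 : 0 < e by near: e; exact: nbhs_right_gt.
    have e_rho : e <= rho by near: e; exact: nbhs_right_ltW.
    have vx : l1norm (v^T - x^T) < rho by near: v; exact: near_l1norm_lt.
    by move=> _; apply: Phi_near e0 e_rho; exact: ltW.
  have x1_gt0 : 0 < `|l1norm x^T - 1| by rewrite normr_gt0 subr_eq0.
  near=> v e => v1; exfalso; have := ler_dist_l1norm x^T v^T.
  rewrite v1 l1norm_distC leNgt => /negP; apply.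
  by near: v; exact: near_l1norm_lt.
have PF : ProperFilter (nbhs (0 : R)^'+) by exact: at_right_proper_filter.
move=> near_e; have [e [Ke e0]] := filter_ex (filterI near_e (nbhs_right_gt 0)).
exists e => // t t1; rewrite -[t]trmxK; apply: Ke; last by rewrite trmxK.
move=> i; rewrite /= in_itv /= mxE -ler_norml -t1; exact: ler_norm_l1norm.
Unshelve. all: by end_near.
Qed.

End l1sphere.

Lemma Ndelta_scale d (T : Type) (R : realType) (A : nat -> T -> 'M[R]_d) (N : T -> nat)
    (delta c : R) (t : 'cV[R]_d) (w : T) :
  0 < c -> Ndelta A N delta (c *: t) w = Ndelta A N delta t w.
Proof.
move=> c0; apply: eq_count => i /=.
by rewrite -scalemxAr !l1normZ gtr0_norm // mulrCA ltr_pM2l.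
Qed.

Section branching.
Context dT (T : measurableType dT) (R : realType) (P : probability T R) (d : nat)
  (A : nat -> T -> 'M[R]_d) (N : T -> nat).
Hypothesis mA : forall i (j k : 'I_d), measurable_fun setT (fun w => A i w j k).
Hypothesis mN : forall n, measurable [set w | N w = n].
Hypothesis A_ge0 : forall i w (j k : 'I_d), 0 <= A i w j k.
Implicit Types (t : 'cV[R]_d) (k : nat).

Lemma measurable_l1norm_mulmx i t : measurable_fun setT (fun w => l1norm ((A i w)^T *m t)).
Proof.
apply: measurable_sum => l; apply: measurableT_comp => //.
under eq_fun do rewrite !mxE; apply: measurable_sum => j.
by under eq_fun do rewrite mxE; apply: measurable_funM.
Qed.

Lemma measurable_msum i : measurable_fun setT (fun w => msum (A i w)).
Proof. by do 2!apply: measurable_sum => ?. Qed.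

Lemma measurable_Nt_eq t m : measurable [set w | Nt A N t w = m].
Proof.
apply: measurable_count_iota => // i.
under eq_set do rewrite -l1norm_gt0.
by apply: measurable_set_bool; apply: measurable_fun_ltr => //; exact: measurable_l1norm_mulmx.
Qed.

Lemma measurable_Ndelta_eq delta t m : measurable [set w | Ndelta A N delta t w = m].
Proof.
apply: measurable_count_iota => // i.
by apply: measurable_set_bool; apply: measurable_fun_ltr => //; exact: measurable_l1norm_mulmx.
Qed.

Definition tame k t i w : bool :=
  ((l1norm ((A i w)^T *m t) == 0) || (k.+1%:R^-1 < l1norm ((A i w)^T *m t))) &&
  (msum (A i w) <= k%:R).

Definition tame_event t k : set T := [set w | all (tame k t ^~ w) (iota 1 (N w))].

Lemma measurable_tame_event t k : measurable (tame_event t k).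
Proof.
apply: measurable_all_iota => // i; apply: measurable_set_bool.
apply: measurable_and; first apply: measurable_or.
- by apply: measurable_fun_eqr => //; exact: measurable_l1norm_mulmx.
- by apply: measurable_fun_ltr => //; exact: measurable_l1norm_mulmx.
- by apply: measurable_fun_ler => //; exact: measurable_msum.
Qed.

Lemma tame_mono t i w k k' : (k <= k')%N -> tame k t i w -> tame k' t i w.
Proof.
move=> kk' /andP[small mass]; apply/andP; split.
  case/orP: small => [->//|small]; apply/orP; right; apply: le_lt_trans small.
  by rewrite lef_pV2 ?posrE // ler_nat.
by apply: le_trans mass _; rewrite ler_nat.
Qed.

Lemma tame_event_mono t : nondecreasing_seq (tame_event t).
Proof.
by move=> k k' kk'; apply/subsetPset => w; apply: sub_all => i; exact: tame_mono.
Qed.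

Lemma near_tame t i w : \forall k \near \oo, tame k t i w.
Proof.
have mass : \forall k \near \oo, msum (A i w) <= k%:R by exact: nbhs_infty_ger.
have [At0|At_neq0] := eqVneq (l1norm ((A i w)^T *m t)) 0.
  by apply: filterS mass => k; rewrite /tame At0 eqxx.
have At_gt0 : 0 < l1norm ((A i w)^T *m t) by rewrite lt_def At_neq0 l1norm_ge0.
near=> k; rewrite /tame (negbTE At_neq0) /=; apply/andP; split; near: k => //.
exact: (near_infty_natSinv_lt (PosNum At_gt0)).
Unshelve. all: by end_near.
Qed.

Lemma tame_event_cover t : \bigcup_k tame_event t k = setT.
Proof.
apply/seteqP; split => // w _.
have : \forall k \near \oo, tame_event t k w.
  rewrite /tame_event /=; elim: (iota 1 (N w)) => [|i s IH] /=; first by near=> k.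
  by near=> k; apply/andP; split; near: k; [exact: near_tame | exact: IH].
by move=> [K _ tameK]; exists K => //; apply: tameK => /=.
Unshelve. all: by end_near.
Qed.

Lemma tame_event_pr_gt t (x : R) : x < 1 -> exists k, x < pr P (tame_event t k).
Proof.
move=> x1; have := @nondecreasing_cvg_mu _ _ _ P _ (measurable_tame_event t).
rewrite tame_event_cover => /(_ measurableT (tame_event_mono t)).
set L := (X in _ --> X); have -> : L = 1%E by exact: probability_setT.
move=> /fine_cvgP[_ cvg_pr]; have [K _ xK] := cvgr_gt _ cvg_pr _ x1.
by exists K; apply: xK => /=.
Qed.

Lemma Nt_le_Ndelta_tame t t' k delta w : l1norm t = 1 ->
  l1norm (t' - t) <= tame_radius R k -> 0 <= delta -> delta <= tame_radius R k ->
  tame_event t k w -> (Nt A N t w <= Ndelta A N delta t' w)%N.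
Proof.
move=> t1 t't d0 d_le /allP tame_w; rewrite /Nt /Ndelta.
rewrite -(eq_in_count (a1 := fun i => ((A i w)^T *m t != 0) && tame k t i w)); last first.
  by move=> i /tame_w ->; rewrite andbT.
apply: sub_count => i /andP[nz /andP[small mass]].
apply: (l1norm_mulmx_perturb (A_ge0 i w) mass t1) => //.
by move: small; rewrite l1norm_eq0 (negbTE nz).
Qed.

Lemma mean_Ndelta_gt_near t : l1norm t = 1 ->
  {ae P, forall w, (1 <= Nt A N t w)%N} -> (P [set w | Nt A N t w = 1%N] < 1)%E ->
  exists2 rho, 0 < rho & forall t' e, l1norm (t' - t) <= rho -> 0 < e -> e <= rho ->
    forall delta, 0 <= delta -> delta <= e ->
    ((1 + e)%:E < \int[P]_w ((Ndelta A N delta t' w)%:R : R)%:E)%E.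
Proof.
move=> t1 Nt_ge1 PNt1; set p := pr P [set w | (2 <= Nt A N t w)%N].
have p_gt0 : 0 < p := pr_ge2_gt0 (measurable_Nt_eq t) Nt_ge1 PNt1.
have [k PEk] : exists k, 1 - p / 4 < pr P (tame_event t k) by apply: tame_event_pr_gt; lra.
exists (Num.min (tame_radius R k) (p / 2)) => [|t' e].
  by rewrite lt_min tame_radius_gt0 divr_gt0.
rewrite !le_min => /andP[t't _] e0 /andP[e_rho e_p] delta d0 d_le.
have mE := measurable_tame_event t k.
have mH : measurable [set w | (1 <= Nt A N t w)%N].
  exact: measurable_nat_pred (fun n => 1 <= n)%N (measurable_Nt_eq t).
have mG : measurable [set w | (2 <= Nt A N t w)%N].
  exact: measurable_nat_pred (fun n => 2 <= n)%N (measurable_Nt_eq t).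
have Nt_le w := Nt_le_Ndelta_tame (w := w) t1 t't d0 (le_trans d_le e_rho).
apply: lt_le_trans (tail2_le_integral_nat P mE (measurable_Nt_eq t)
  (measurable_Ndelta_eq delta t') Nt_le).
have [mEH mEG] := (measurableI _ _ mE mH, measurableI _ _ mE mG).
suff : ((1 + e)%:E < (pr P (tame_event t k `&` [set w | (1 <= Nt A N t w)%N]))%:E +
                      (pr P (tame_event t k `&` [set w | (2 <= Nt A N t w)%N]))%:E)%E.
  by rewrite -(prE P mEH) -(prE P mEG).
rewrite -EFinD lte_fin; have := pr_setI_ge P mE mH; have := pr_setI_ge P mE mG.
by rewrite (pr_ae mH Nt_ge1) -/p; clearbody p; lra.
Qed.

End branching.

Theorem lemma4p1 (dT : measure_display) (T : measurableType dT) (R : realType)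
  (P : probability T R) (d : nat)
  (A : nat -> T -> 'M[R]_d) (N : T -> nat)
  (* A_i are random matrices in G (nonnegative entries) *)
  (hAmeas : forall i (j k : 'I_d), measurable_fun setT (fun w => A i w j k))
  (hNmeas : forall n : nat, measurable [set w | N w = n])
  (hG : forall i w (j k : 'I_d), 0 <= A i w j k)
  (* A_i <> 0 iff i <= N, for i >= 1 *)
  (hsupp : forall w i, (1 <= i)%N -> (A i w != 0) = (i <= N w)%N) :
  (forall (t : 'cV[R]_d) (delta c : R) (w : T),
      t != 0 -> 0 <= delta -> 0 < c ->
      Ndelta A N delta t w = Ndelta A N delta (c *: t) w)
  /\
  ( (* (C1) *)
    ({ae P, forall w, (1 <= N w)%N} /\
     (1 < \int[P]_w ((N w)%:R : R)%:E)%E /\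
     (\int[P]_w ((N w)%:R : R)%:E < +oo)%E) ->
    (* (C7) *)
    ({ae P, forall w, forall t : 'cV[R]_d, t != 0 -> (1 <= Nt A N t w)%N} /\
     (forall t : 'cV[R]_d, t != 0 -> (P [set w | Nt A N t w = 1%N] < 1)%E) /\
     (exists eps0 : R, 0 < eps0 /\
      exists it : 'cV[R]_d -> nat, exists M : R,
        forall t : 'cV[R]_d, l1norm t = 1 ->
          (1 <= it t)%N /\
          {ae P, forall w, (A (it t) w)^T *m t != 0} /\
          (\int[P]_w negpow eps0 ((A (it t) w)^T *m t) <= M%:E)%E)) ->
    exists delta0 eta : R, 0 < delta0 /\ 0 < eta /\
      forall (t : 'cV[R]_d) (delta : R), t != 0 -> 0 <= delta -> delta <= delta0 ->
        ((1 + eta)%:E < \int[P]_w ((Ndelta A N delta t w)%:R : R)%:E)%E).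
Proof.
split=> [t delta c w _ _ c0 | _ [Nt_ge1 [PNt1 _]]]; first by rewrite Ndelta_scale.
have Nt_ge1_at t : t != 0 -> {ae P, forall w, (1 <= Nt A N t w)%N}.
  by move=> t_neq0; apply: filterS Nt_ge1 => w /(_ t t_neq0).
have sphere_neq0 (t : 'cV[R]_d) : l1norm t = 1 -> t != 0 by rewrite -l1norm_gt0 => ->.
have [e e_gt0 mean_gt] := uniform_on_l1sphere (fun t t1 =>
  mean_Ndelta_gt_near hAmeas hNmeas hG t1 (Nt_ge1_at t (sphere_neq0 t t1))
    (PNt1 t (sphere_neq0 t t1))).
exists e, e; do 2!split => //; move=> t delta t_neq0 d0 d_le.
have -> : (fun w => ((Ndelta A N delta t w)%:R : R)%:E) =
          (fun w => ((Ndelta A N delta ((l1norm t)^-1 *: t) w)%:R : R)%:E).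
  by apply/funext => w; rewrite Ndelta_scale // invr_gt0 l1norm_gt0.
exact: mean_gt _ (l1norm_normalize t_neq0) delta d0 d_le.
Qed.
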